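(* Let $P$ be a finite, nonempty, ranked poset of width at most $3$. If $P$ is minimal automorphic, then $P$ is (isomorphic to) a 6-tower. Conversely, every 6-tower is automorphic.
   Context: All posets are finite. For a poset $P$ and $p\in P$, the rank $r(p)$ of $p$ is the largest $m$ such that there is a chain $p_0<p_1<\dots<p_m=p$ in $P$. The poset $P$ is ranked of rank $r(P)$ if every maximal chain of $P$ has exactly $r(P)+1$ elements. For integers $0\le i\le j$, $P(i,j)=\{p\in P: i\le r(p)\le j\}$ and $P(i)=P(i,i)$, each with the induced order. The width of $P$ is the size of its largest antichain. A subset $Q\subseteq P$ (with induced order) is a retract of $P$ if there is an order-preserving map $f:P\to Q$ with $f(q)=q$ for all $q\in Q$. The ordinal sum of posets $P_1,\dots,P_k$ ($k\ge 1$) is their disjoint union, ordered by the orders of the $P_i$ together with $p<q$ whenever $p\in P_i$, $q\in P_j$, $i<j$. The 6-crown $C_6$ is the poset on $\{x_0,x_1,x_2,y_0,y_1,y_2\}$ whose only strict comparabilities are $x_0<y_0>x_1<y_1>x_2<y_2>x_0$. A 6-stack is a ranked poset $P$ of rank $n\ge 1$ such that for each $0\le i<n$, $P(i,i+1)$ is isomorphic to $C_6$. A 6-tower is an ordinal sum of one or more posets each of which is either a two-element antichain or a 6-stack. A poset is automorphic if it has an automorphism with no fixed point; it is minimal automorphic if it is automorphic and no proper retract of it is automorphic. *)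

(* Finite posets are [finPOrderType d]; induced subposets are
   represented by subsets [S : {set P}] carrying the order of P. *)
From HB Require Import structures.
From mathcomp Require Import all_boot all_order.
Set Implicit Arguments. Unset Strict Implicit. Unset Printing Implicit Defensive.
Import Order.TTheory.
Local Open Scope order_scope.

Section PosetDefs.
Context {d : Order.disp_t} {P : finPOrderType d}.

Definition chainIn (S C : {set P}) : bool :=
  (C \subset S) && [forall x in C, forall y in C, x >=< y].

Definition maxchainIn (S C : {set P}) : bool :=
  chainIn S C && [forall D : {set P}, (chainIn S D && (C \subset D)) ==> (D == C)].

Definition rankIn (S : {set P}) (p : P) : nat :=
  (\max_(C : {set P} | chainIn S C && (p \in C) && [forall x in C, (x <= p)%O]) #|C|.-1)%N.

Definition rankedIn (S : {set P}) (n : nat) : Prop :=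
  forall C : {set P}, maxchainIn S C -> #|C| = n.+1.

Definition levelIn (S : {set P}) (i j : nat) : {set P} :=
  [set p in S | i <= rankIn S p <= j]%N.

Definition antichain (A : {set P}) : Prop :=
  forall x y, x \in A -> y \in A -> x != y -> ~~ (x >=< y).

Definition width_le (w : nat) : Prop :=
  forall A : {set P}, antichain A -> (#|A| <= w)%N.

(* The 6-crown on 'I_6: 0,1,2 = x0,x1,x2 and 3,4,5 = y0,y1,y2; strict
   comparabilities x0<y0>x1<y1>x2<y2>x0. *)
Definition crown6_lt (a b : 'I_6) : bool :=
  ((a : nat), (b : nat)) \in [:: (0,3); (1,3); (1,4); (2,4); (2,5); (0,5)]%N.

Definition iso_C6 (Q : {set P}) : Prop :=
  exists f : 'I_6 -> P,
    [/\ injective f, f @: [set: 'I_6] = Q &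
        (forall a b, (f a < f b) = crown6_lt a b)].

Definition stack6In (S : {set P}) : Prop :=
  exists n : nat, [/\ (1 <= n)%N, rankedIn S n &
    (forall i : nat, (i < n)%N -> iso_C6 (levelIn S i i.+1))].

Definition antichain2 (S : {set P}) : Prop := #|S| = 2%N /\ antichain S.

(* P is (isomorphic to) a 6-tower: P splits into k >= 1 blocks, ordered as an
   ordinal sum, each block being a two-element antichain or a 6-stack *)
Definition tower6 : Prop :=
  exists k : nat, (0 < k)%N /\
  exists blk : P -> 'I_k,
    (forall x y : P, (blk x < blk y)%N -> x < y) /\
    (forall i : 'I_k, antichain2 [set x | blk x == i] \/
                      stack6In [set x | blk x == i]).

Definition retract (Q : {set P}) : Prop :=
  exists f : P -> P,
    [/\ forall x, f x \in Q,
        (forall x y, x <= y -> f x <= f y) &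
        {in Q, forall q, f q = q}].

Definition automorphicIn (Q : {set P}) : Prop :=
  exists g h : P -> P,
    [/\ {in Q, forall x, g x \in Q} /\ {in Q, forall x, h x \in Q},
        {in Q, cancel g h} /\ {in Q, cancel h g},
        ({in Q &, forall x y, x <= y -> g x <= g y}),
        ({in Q &, forall x y, x <= y -> h x <= h y}) &
        {in Q, forall x, g x != x}].

Definition automorphic : Prop := automorphicIn [set: P].

Definition minimal_automorphic : Prop :=
  automorphic /\
  forall Q : {set P}, retract Q -> Q \proper [set: P] -> ~ automorphicIn Q.

End PosetDefs.

Arguments width_le {d} P w.
Arguments tower6 {d} P.
Arguments automorphic {d} P.
Arguments minimal_automorphic {d} P.

(* A fixed-point-free automorphism g of a 6-stack is obtained from the matching structure
   of the crowns: each element y of rank k + 1 is above every element of rank k except one,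
   its partner; following partners down to rank 0 gives y a base, and p < q holds exactly
   when q is at least two ranks higher, or one rank higher with a different base.  Rotating
   the three bases while keeping ranks is then an automorphism, and automorphisms of the
   blocks of an ordinal sum glue together.

   Conversely let P be minimal automorphic, ranked, of width at most 3, with g a
   fixed-point-free automorphism.  Then g preserves ranks and acts transitively on each
   layer, which has 2 or 3 elements.  By minimality no proper g-stable subset is a retract;
   so no layer can be retracted onto its unique covers, every element has at least two
   covers in each adjacent layer, and double counting shows that two consecutive layers
   are either completely joined or form a 6-crown.  A 3-element layer completely joined on
   both sides retracts onto two of its elements, so the complete joins cut P into blocks
   that are two-element antichains or 6-stacks. *)

From HB Require Import structures.
From mathcomp Require Import all_boot all_order zify.
Set Implicit Arguments. Unset Strict Implicit. Unset Printing Implicit Defensive.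
Import Order.TTheory.
Local Open Scope order_scope.

Lemma card3P (T : finType) (A : {set T}) : #|A| = 3 ->
  exists a b c, [/\ a != b, a != c, b != c & A = [set a; b; c]].
Proof.
move=> cA; have [a aA] : exists a, a \in A by apply/card_gt0P; rewrite cA.
have /eqP : #|A :\ a| = 2 by move: (cardsD1 a A); rewrite aA cA => -[].
case/cards2P=> b [c [bc eAa]].
have [/setD1P[ba _] /setD1P[ca _]] : b \in A :\ a /\ c \in A :\ a by rewrite eAa !inE !eqxx orbT.
by exists a, b, c; split; rewrite // 1?eq_sym // -(setD1K aA) eAa setUA.
Qed.

Lemma card_gt2_avoid2 (T : finType) (A : {set T}) a b : (2 < #|A|)%N ->
  exists2 t, t \in A & (t != a) && (t != b).
Proof.
move=> A3; have : (0 < #|A :\ a :\ b|)%N.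
  have := cardsD1 a A; have := cardsD1 b (A :\ a).
  have := leq_b1 (a \in A); have := leq_b1 (b \in A :\ a); lia.
by case/card_gt0P=> t /setD1P[tb /setD1P[ta tA]]; exists t; rewrite ?ta.
Qed.

Lemma card3_rotation (T : finType) (A : {set T}) : #|A| = 3 ->
  exists tau : T -> T,
    {in A, forall x, [/\ tau x \in A, tau x != x & tau (tau (tau x)) = x]}.
Proof.
case/card3P=> a [b [c [ab ac bc ->]]].
exists (fun x => if x == a then b else if x == b then c else a).
have ba : (b == a) = false by rewrite eq_sym (negbTE ab).
have ca : (c == a) = false by rewrite eq_sym (negbTE ac).
have cb : (c == b) = false by rewrite eq_sym (negbTE bc).
move=> x; rewrite !inE => /orP[/orP[]|] /eqP->;
  by rewrite !(eqxx, ba, ca, cb, negbTE ab, negbTE ac, negbTE bc, orbT).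
Qed.

Lemma card_setId_sum (T : finType) (A : {set T}) (Q : pred T) :
  #|[set x in A | Q x]| = (\sum_(x in A) Q x)%N.
Proof.
rewrite -sum1_card (eq_bigl (fun x => (x \in A) && Q x)) => [|x]; last by rewrite inE.
by rewrite big_mkcondr; apply: eq_bigr => x _; case: (Q x).
Qed.

(** * Chains and ranks *)

Section ChainRank.
Context {d : Order.disp_t} {P : finPOrderType d}.
Implicit Types (S C D M : {set P}) (p q x y z : P).

Lemma chainInP S C :
  reflect (C \subset S /\ {in C &, forall x y, x >=< y}) (chainIn S C).
Proof.
apply: (iffP andP) => -[sCS cmpC]; split=> //.
  by move=> x y xC yC; move/forall_inP/(_ x xC)/forall_inP: cmpC; apply.
by apply/forall_inP=> x xC; apply/forall_inP=> y yC; apply: cmpC.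
Qed.

Lemma chainIn_sub S C : chainIn S C -> C \subset S.
Proof. by case/chainInP. Qed.

Lemma chainIn_comparable S C : chainIn S C -> {in C &, forall x y, x >=< y}.
Proof. by case/chainInP. Qed.

Lemma chainIn1 S p : p \in S -> chainIn S [set p].
Proof.
move=> pS; apply/chainInP; rewrite sub1set pS; split=> // x y.
by rewrite !in_set1 => /eqP-> /eqP->; apply: comparablexx.
Qed.

Lemma chainInU1 S C z : chainIn S C -> z \in S -> {in C, forall x, x >=< z} ->
  chainIn S (z |: C).
Proof.
case/chainInP=> sCS cmpC zS cmpz; apply/chainInP; split.
  by rewrite subUset sub1set zS.
move=> x y /setU1P[->|xC] /setU1P[->|yC]; first exact: comparablexx.
- by rewrite comparable_sym cmpz.
- exact: cmpz.
- exact: cmpC.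
Qed.

Lemma chainIn_setT S C : chainIn S C -> chainIn [set: P] C.
Proof. by case/chainInP=> _ cmpC; apply/chainInP; rewrite subsetT. Qed.

Lemma chainIn_lt S C x y : chainIn S C -> x \in C -> y \in C -> x != y ->
  (x < y) || (y < x).
Proof.
move=> cC xC yC nxy; move: (chainIn_comparable cC xC yC).
by rewrite /Order.comparable !le_eqVlt (negbTE nxy) eq_sym (negbTE nxy).
Qed.

Lemma leq_rankIn S C p : chainIn S C -> p \in C -> {in C, forall x, x <= p} ->
  (#|C|.-1 <= rankIn S p)%N.
Proof.
move=> cC pC Cp; apply: (leq_bigmax_cond (P := fun C => _)).
by rewrite cC pC; apply/forall_inP.
Qed.

Lemma rankIn_witness S p : p \in S -> exists C, [/\ chainIn S C, p \in C,
  {in C, forall x, x <= p} & #|C| = (rankIn S p).+1].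
Proof.
move=> pS; rewrite /rankIn; set A := [pred C : {set P} | chainIn S C && (p \in C)
                                          && [forall x in C, x <= p]].
have Ap : [set p] \in A.
  by rewrite inE chainIn1 // set11; apply/forall_inP=> x /set1P->.
have A0 : (0 < #|A|)%N by apply/card_gt0P; exists [set p].
have [C + ->] := @eq_bigmax_cond _ A (fun C => #|C|.-1) A0.
rewrite inE => /andP[/andP[cC pC] /forall_inP Cp].
by exists C; split=> //; rewrite prednK //; apply/card_gt0P; exists p.
Qed.

Lemma rankIn_lt S p q : p \in S -> q \in S -> p < q -> (rankIn S p < rankIn S q)%N.
Proof.
move=> pS qS pq; have [C [cC pC Cp cardC]] := rankIn_witness pS.
have Cq : {in C, forall x, x <= q} by move=> x /Cp xp; apply: le_trans xp (ltW pq).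
have qC : q \notin C by apply: contraL pq => /Cp /le_gtF ->.
have := @leq_rankIn S (q |: C) q; rewrite cardsU1 qC cardC; apply.
- by apply: chainInU1 => // x /Cq /le_comparable.
- exact: setU11.
- by move=> x /setU1P[->|/Cq].
Qed.

Lemma chainIn_lt_rank S C x y : chainIn S C -> x \in C -> y \in C ->
  (rankIn S x <= rankIn S y)%N -> x <= y.
Proof.
move=> cC xC yC; have [->|nxy] := eqVneq x y; first by rewrite lexx.
have sCS := subsetP (chainIn_sub cC).
case/orP: (chainIn_lt cC xC yC nxy) => [/ltW//|yx].
by rewrite leqNgt rankIn_lt ?sCS.
Qed.

Lemma maxchainIn_ext S C : chainIn S C -> exists M, maxchainIn S M /\ C \subset M.
Proof.
move=> cC; have PC : chainIn S C && (C \subset C) by rewrite cC subxx.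
have [M /andP[cM sCM] Mmax] :=
  @arg_maxnP _ C (fun D => chainIn S D && (C \subset D)) (fun D => #|D|) PC.
exists M; split=> //; rewrite /maxchainIn cM; apply/forallP=> D.
apply/implyP=> /andP[cD sMD]; rewrite eq_sym eqEcard sMD.
by apply: Mmax; rewrite cD (subset_trans sCM sMD).
Qed.

Section Ranked.
Variables (S : {set P}) (n : nat).
Hypothesis rkS : rankedIn S n.

Lemma rankIn_le p : p \in S -> (rankIn S p <= n)%N.
Proof.
move=> pS; have [C [cC _ _ cardC]] := rankIn_witness pS.
have [M [/rkS cardM sCM]] := maxchainIn_ext cC.
by have := subset_leq_card sCM; rewrite cardC cardM.
Qed.

(* The n+1 elements of a maximal chain have pairwise distinct ranks in [0, n]. *)
Lemma maxchainIn_ranks M : maxchainIn S M ->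
  forall j, (j <= n)%N -> exists2 x, x \in M & rankIn S x = j.
Proof.
move=> mM j jn; have cardM := rkS mM; case/andP: mM => cM _.
have sMS := subsetP (chainIn_sub cM).
pose v x : 'I_n.+1 := inord (rankIn S x).
have vE x : x \in M -> v x = rankIn S x :> nat.
  by move=> xM; rewrite inordK // ltnS rankIn_le ?sMS.
have vinj : {in M &, injective v}.
  move=> x y xM yM /(congr1 (@nat_of_ord _)); rewrite !vE // => exy.
  by apply/le_anti; rewrite !(chainIn_lt_rank cM) ?exy.
have /imsetP[x xM /(congr1 (@nat_of_ord _))] : inord j \in v @: M.
  suff -> : v @: M = setT by [].
  by apply/eqP; rewrite eqEcard subsetT (card_in_imset vinj) cardM cardsT card_ord ltnSn.
by rewrite vE // inordK // => ->; exists x.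
Qed.

Lemma chainIn_ranks C : chainIn S C -> exists M, [/\ chainIn S M, C \subset M &
  forall j, (j <= n)%N -> exists2 x, x \in M & rankIn S x = j].
Proof.
move=> cC; have [M [mM sCM]] := maxchainIn_ext cC.
by exists M; split=> //; [case/andP: mM | apply: maxchainIn_ranks].
Qed.

Lemma rankIn_between p q j : p \in S -> q \in S -> p <= q ->
  (rankIn S p <= j <= rankIn S q)%N ->
  exists2 z, z \in S & [/\ rankIn S z = j, p <= z & z <= q].
Proof.
move=> pS qS pq /andP[pj jq].
have c2 : chainIn S [set p; q].
  apply/chainInP; split; first by rewrite subUset !sub1set pS qS.
  by move=> x y /set2P[]-> /set2P[]->; rewrite /Order.comparable ?lexx ?pq ?orbT.
have [M [cM sM hM]] := chainIn_ranks c2.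
have [z zM rz] := hM j (leq_trans jq (rankIn_le qS)).
have [pM qM] : p \in M /\ q \in M by rewrite !(subsetP sM) ?set21 ?set22.
exists z; first exact: (subsetP (chainIn_sub cM)).
by split=> //; apply: (chainIn_lt_rank cM); rewrite ?rz.
Qed.

Lemma rankIn_above p j : p \in S -> (rankIn S p <= j <= n)%N ->
  exists2 q, q \in S & rankIn S q = j /\ p <= q.
Proof.
move=> pS /andP[pj jn]; have [M [cM sM hM]] := chainIn_ranks (chainIn1 pS).
have [z zM rz] := hM j jn; have pM : p \in M by rewrite (subsetP sM) ?set11.
exists z; first exact: (subsetP (chainIn_sub cM)).
by split=> //; apply: (chainIn_lt_rank cM); rewrite ?rz.
Qed.

Lemma rankIn_below p j : p \in S -> (j <= rankIn S p)%N ->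
  exists2 q, q \in S & rankIn S q = j /\ q <= p.
Proof.
move=> pS pj; have [M [cM sM hM]] := chainIn_ranks (chainIn1 pS).
have [z zM rz] := hM j (leq_trans pj (rankIn_le pS)).
have pM : p \in M by rewrite (subsetP sM) ?set11.
exists z; first exact: (subsetP (chainIn_sub cM)).
by split=> //; apply: (chainIn_lt_rank cM); rewrite ?rz.
Qed.

End Ranked.
End ChainRank.

Section Layers.
Context {d : Order.disp_t} {P : finPOrderType d}.

Definition layer (S : {set P}) (j : nat) : {set P} := [set p in S | rankIn S p == j].

Lemma in_layer S j p : (p \in layer S j) = (p \in S) && (rankIn S p == j).
Proof. by rewrite inE. Qed.

End Layers.

(** * The 6-crown *)

Lemma forall_ord6 (Q : 'I_6 -> Prop) :
  Q (@Ordinal 6 0 isT) -> Q (@Ordinal 6 1 isT) -> Q (@Ordinal 6 2 isT) ->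
  Q (@Ordinal 6 3 isT) -> Q (@Ordinal 6 4 isT) -> Q (@Ordinal 6 5 isT) ->
  forall a, Q a.
Proof.
by move=> Q0 Q1 Q2 Q3 Q4 Q5 [[|[|[|[|[|[|//]]]]]] a6];
  rewrite (bool_irrelevance a6 isT).
Qed.

(* The element of [0, 3) incomparable to b in [3, 6) is (b + 2) mod 3. *)
Lemma crown6_ltE (a b : 'I_6) :
  crown6_lt a b = [&& (a < 3)%N, (3 <= b)%N & a != (b + 2) %% 3 :> nat].
Proof. by move: a b; do 2 apply: forall_ord6. Qed.

Lemma crown6_ltNE (a b : 'I_6) : (a < 3)%N -> (3 <= b)%N ->
  ~~ crown6_lt a b = (a == (b + 2) %% 3 :> nat).
Proof. by move=> a3 b3; rewrite crown6_ltE a3 b3 negbK. Qed.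

Lemma card_crown6_bottom : #|[set a : 'I_6 | (a < 3)%N]| = 3.
Proof. by rewrite -sum1dep_card big_mkcond !big_ord_recl big_ord0. Qed.

Lemma card_crown6_top : #|[set a : 'I_6 | (3 <= a)%N]| = 3.
Proof. by rewrite -sum1dep_card big_mkcond !big_ord_recl big_ord0. Qed.

Lemma crown6_neighbour (a : 'I_6) :
  exists b, if (a < 3)%N then crown6_lt a b else crown6_lt b a.
Proof.
move: a; apply: forall_ord6;
  [ by exists (@Ordinal 6 3 isT) | by exists (@Ordinal 6 3 isT)
  | by exists (@Ordinal 6 4 isT) | by exists (@Ordinal 6 0 isT)
  | by exists (@Ordinal 6 1 isT) | by exists (@Ordinal 6 2 isT) ].
Qed.

Lemma crown6_lt_sep (a b : 'I_6) : a != b ->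
  exists c, (crown6_lt a c != crown6_lt b c) || (crown6_lt c a != crown6_lt c b).
Proof.
move: a b; do 2 apply: forall_ord6; move=> //= _.
all: first [ by exists (@Ordinal 6 0 isT) | by exists (@Ordinal 6 1 isT)
           | by exists (@Ordinal 6 2 isT) | by exists (@Ordinal 6 3 isT)
           | by exists (@Ordinal 6 4 isT) | by exists (@Ordinal 6 5 isT) ].
Qed.

Section CrownRecognition.
Context {d : Order.disp_t} {P : finPOrderType d}.

Lemma crown6_order_inj (f : 'I_6 -> P) :
  (forall a b, (f a < f b) = crown6_lt a b) -> injective f.
Proof.
move=> fo a b fab; apply/eqP; apply: contraT => /crown6_lt_sep[c].
by rewrite -!fo fab !eqxx.
Qed.

Lemma iso_C6_matching (X Y : {set P}) (alpha : P -> P) :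
  #|X| = 3 -> (#|Y| <= 3)%N -> [disjoint X & Y] ->
  {in X, forall x, alpha x \in Y} -> {in X &, injective alpha} ->
  {in X :|: Y &, forall x y, (x < y) = [&& x \in X, y \in Y & y != alpha x]} ->
  iso_C6 (X :|: Y).
Proof.
move=> cX cY dXY aY ainj ltE.
have [x0 x0X] : exists x0, x0 \in X by apply/card_gt0P; rewrite cX.
pose xk k := nth x0 (enum X) k.
have sizeX : size (enum X) = 3 by rewrite -cardE cX.
have xkX k : (k < 3)%N -> xk k \in X by move=> k3; rewrite -mem_enum mem_nth ?sizeX.
have xk_eq k k' : (k < 3)%N -> (k' < 3)%N -> (xk k == xk k') = (k == k').
  by move=> k3 k'3; rewrite nth_uniq ?sizeX ?enum_uniq.
have j3 (a : 'I_6) : ((a + 2) %% 3 < 3)%N by rewrite ltn_mod.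
pose f (a : 'I_6) := if (a < 3)%N then xk a else alpha (xk ((a + 2) %% 3)).
have fX a : (f a \in X) = (a < 3)%N.
  rewrite /f; case: ifP => a3; first exact: xkX.
  by apply: (disjointFl dXY); apply/aY/xkX.
have fY a : (f a \in Y) = ~~ (a < 3)%N.
  rewrite /f; case: ifP => a3 /=; last exact/aY/xkX.
  by apply: (disjointFr dXY); apply/xkX.
have fXY a : f a \in X :|: Y by rewrite in_setU fX fY orbN.
have fo a b : (f a < f b) = crown6_lt a b.
  rewrite ltE // fX fY crown6_ltE -leqNgt.
  case: (ltnP a 3) => a3; case: (leqP 3 b) => b3 //=.
  rewrite /f a3 ltnNge b3 /= (inj_in_eq ainj) ?xkX // xk_eq //.
  by rewrite eq_sym.
exists f; split=> //; first exact: crown6_order_inj.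
apply/eqP; rewrite eqEcard; apply/andP; split.
  by apply/subsetP=> _ /imsetP[a _ ->].
rewrite card_imset ?cardsT ?card_ord; last exact: crown6_order_inj.
by apply: leq_trans (leq_card_setU X Y) _; rewrite cX; lia.
Qed.

End CrownRecognition.

(** * 6-towers are automorphic *)

Section Stack.
Context {d : Order.disp_t} {P : finPOrderType d}.
Variables (S : {set P}) (m : nat).
Hypothesis rkS : rankedIn S m.
Hypothesis m_gt0 : (0 < m)%N.
Hypothesis crS : forall i, (i < m)%N -> iso_C6 (levelIn S i i.+1).
Local Notation r := (rankIn S).
Local Notation K := (layer S).

Lemma crown_layers i : (i < m)%N -> exists f : 'I_6 -> P, [/\ injective f,
  K i = f @: [set a : 'I_6 | (a < 3)%N], K i.+1 = f @: [set a : 'I_6 | (3 <= a)%N]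
  & forall a b, (f a < f b) = crown6_lt a b].
Proof.
move=> im; have [f [finj fim fo]] := crS im.
have fS a : f a \in S /\ (i <= r (f a) <= i.+1)%N.
  by apply/andP; have := imset_f f (in_setT a); rewrite fim inE.
have rf a : r (f a) = if (a < 3)%N then i else i.+1.
  have [b] := crown6_neighbour a; have [aS ra] := fS a; have [bS rb] := fS b.
  case: ifP => _; rewrite -fo => lt;
    [have := rankIn_lt aS bS lt | have := rankIn_lt bS aS lt]; move: ra rb; lia.
have layerE j : (i <= j <= i.+1)%N ->
    K j = f @: [set a : 'I_6 | (if (a < 3)%N then i else i.+1) == j].
  move=> ij; apply/setP=> p; rewrite in_layer.
  apply/andP/imsetP => [[pS /eqP rp]|[a]]; last by rewrite inE -rf => /eqP <- ->; rewrite (fS a).1.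
  have : p \in levelIn S i i.+1 by rewrite inE pS rp.
  by rewrite -fim => /imsetP[a _ pa]; exists a; rewrite // inE -rf -pa rp.
exists f; split=> //; rewrite layerE ?leqnn ?leqnSn //.
- have -> : [set a : 'I_6 | (if (a < 3)%N then i else i.+1) == i] = [set a : 'I_6 | (a < 3)%N].
    by apply/setP=> a; rewrite !inE; case: ifP; rewrite ?eqxx ?(gtn_eqF (ltnSn i)).
  by [].
- have -> : [set a : 'I_6 | (if (a < 3)%N then i else i.+1) == i.+1] = [set a : 'I_6 | (3 <= a)%N].
    by apply/setP=> a; rewrite !inE (leqNgt 3); case: ifP; rewrite ?eqxx ?(ltn_eqF (ltnSn i)).
  by [].
Qed.

Lemma card_layer_stack j : (j <= m)%N -> #|K j| = 3.
Proof.
rewrite leq_eqVlt => /orP[/eqP->|jm].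
  have m1 : (m.-1 < m)%N by rewrite ltn_predL.
  have [f [finj _ + _]] := crown_layers m1; rewrite prednK // => ->.
  by rewrite card_imset // card_crown6_top.
by have [f [finj -> _ _]] := crown_layers jm; rewrite card_imset // card_crown6_bottom.
Qed.

Lemma exists_not_below i y : (i < m)%N -> y \in K i.+1 ->
  exists2 x, x \in K i & ~~ (x < y).
Proof.
move=> im; have [f [_ -> -> fo]] := crown_layers im.
case/imsetP=> b; rewrite inE => b3 ->.
have a3 : ((b + 2) %% 3 < 3)%N by rewrite ltn_mod.
pose a : 'I_6 := inord ((b + 2) %% 3).
have aE : a = (b + 2) %% 3 :> nat by rewrite inordK // (ltn_trans a3).
exists (f a); first by rewrite imset_f // inE aE.
by rewrite fo crown6_ltNE ?aE.
Qed.

Lemma not_below_uniq i x x' y : (i < m)%N -> x \in K i -> x' \in K i -> y \in K i.+1 ->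
  ~~ (x < y) -> ~~ (x' < y) -> x = x'.
Proof.
move=> im; have [f [_ -> -> fo]] := crown_layers im.
move=> /imsetP[a + ->] /imsetP[a' + ->] /imsetP[b + ->]; rewrite !inE !fo => a3 a'3 b3.
by rewrite !crown6_ltNE // => /eqP ab /eqP a'b; congr f; apply: val_inj; rewrite /= ab a'b.
Qed.

Lemma not_below_inj i x y y' : (i < m)%N -> x \in K i -> y \in K i.+1 -> y' \in K i.+1 ->
  ~~ (x < y) -> ~~ (x < y') -> y = y'.
Proof.
move=> im; have [f [_ -> -> fo]] := crown_layers im.
move=> /imsetP[a + ->] /imsetP[b + ->] /imsetP[b' + ->]; rewrite !inE !fo => a3 b3 b'3.
rewrite !crown6_ltNE // => /eqP ab /eqP ab'; congr f; apply: val_inj => /=.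
by have := ltn_ord b; have := ltn_ord b'; lia.
Qed.

Definition partner y := odflt y [pick x in S | ((r x).+1 == r y) && ~~ (x < y)].

Lemma partnerP y : y \in S -> (0 < r y)%N ->
  [/\ partner y \in S, (r (partner y)).+1 = r y & ~~ (partner y < y)].
Proof.
move=> yS ry; have im : ((r y).-1 < m)%N by rewrite prednK // (rankIn_le rkS).
have yK : y \in K (r y).-1.+1 by rewrite in_layer yS prednK ?eqxx.
have [x] := exists_not_below im yK; rewrite in_layer => /andP[xS /eqP rx] nxy.
rewrite /partner; case: pickP => [z /andP[zS /andP[/eqP rz nzy]] | /(_ x)] //=.
by rewrite xS rx prednK // eqxx nxy.
Qed.

Lemma lt_partner x y : x \in S -> y \in S -> (r x).+1 = r y -> (x < y) = (x != partner y).
Proof.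
move=> xS yS rxy; have [pS rp np] := partnerP yS (leq_trans (ltn0Sn _) (eq_leq rxy)).
apply/idP/idP => [|nxp]; first by apply: contraTneq => ->.
apply: contraR nxp => nxy; apply/eqP.
have im : (r x < m)%N by rewrite rxy (rankIn_le rkS).
apply: (not_below_uniq (y := y) im); rewrite // in_layer ?xS ?pS ?yS -?rxy ?eqxx //.
by apply/eqP/succn_inj; rewrite rp.
Qed.

Definition base y := iter (r y) partner y.

Lemma base_layer0 y : y \in S -> base y \in K 0.
Proof.
rewrite /base; have [k ry] : exists k, r y = k by exists (r y).
rewrite ry; elim: k y ry => [|k IH] y ry yS; first by rewrite in_layer yS ry.
have [pS rp _] := partnerP yS (ltac:(by rewrite ry) : (0 < r y)%N).
by rewrite iterSr; apply: IH => //; apply: succn_inj; rewrite rp ry.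
Qed.

Lemma base_partner y : y \in S -> (0 < r y)%N -> base (partner y) = base y.
Proof. by move=> yS ry; have [_ rp _] := partnerP yS ry; rewrite /base -rp iterSr. Qed.

Lemma base_inj y y' : y \in S -> y' \in S -> r y = r y' -> base y = base y' -> y = y'.
Proof.
have [k ry] : exists k, r y = k by exists (r y).
elim: k y y' ry => [|k IH] y y' ry yS y'S ryy'; first by rewrite /base -ryy' ry.
have ry0 : (0 < r y)%N by rewrite ry.
have ry'0 : (0 < r y')%N by rewrite -ryy' ry.
have [pS rp np] := partnerP yS ry0; have [pS' rp' np'] := partnerP y'S ry'0.
rewrite -(base_partner yS ry0) -(base_partner y'S ry'0) => /IH epi.
have rpk : r (partner y) = k by apply: succn_inj; rewrite rp ry.
have {}epi : partner y = partner y'.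
  by apply: epi => //; apply: succn_inj; rewrite rp rp' ryy'.
have km : (k < m)%N by rewrite -ry (rankIn_le rkS).
apply: (not_below_inj (x := partner y) km); rewrite ?in_layer ?pS ?yS ?y'S ?rpk -?ryy' ?ry ?eqxx //.
by rewrite epi.
Qed.

Lemma base_onto j x : (j <= m)%N -> x \in K 0 -> exists2 y, y \in K j & base y = x.
Proof.
move=> jm xK; have inj : {in K j &, injective base}.
  by move=> y y' /[!inE] /andP[yS /eqP ry] /andP[y'S /eqP ry']; apply: base_inj; rewrite ?ry ?ry'.
have onto : base @: K j = K 0.
  apply/eqP; rewrite eqEcard card_in_imset // !card_layer_stack // andbT.
  by apply/subsetP=> _ /imsetP[y + ->]; rewrite in_layer => /andP[yS _]; apply: base_layer0.
by move: xK; rewrite -onto => /imsetP[y yK ->]; exists y.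
Qed.

Lemma lt_base_adjacent p q : p \in S -> q \in S -> (r p).+1 = r q ->
  (p < q) = (base p != base q).
Proof.
move=> pS qS rpq; have q0 : (0 < r q)%N by rewrite -rpq.
have [pqS rp _] := partnerP qS q0.
rewrite (lt_partner pS qS rpq) -(base_partner qS q0).
apply/idP/idP; apply: contra_neq; last by move->.
by apply: base_inj => //; apply: succn_inj; rewrite rp rpq.
Qed.

(* For r q >= r p + 2, take w <= q of rank r p + 2 and a base t other than base p and
   base w: the element of rank r p + 1 with base t lies strictly between p and w. *)
Lemma lt_stackE p q : p \in S -> q \in S ->
  (p < q) = ((r p).+2 <= r q)%N || ((r p).+1 == r q) && (base p != base q).
Proof.
move=> pS qS; apply/idP/idP => [pq|].
  have := rankIn_lt pS qS pq; rewrite leq_eqVlt => /orP[/eqP rpq|->//].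
  by rewrite rpq eqxx -lt_base_adjacent ?pq ?orbT.
case/orP => [rpq|/andP[/eqP rpq ne]]; last by rewrite lt_base_adjacent.
have [w wS [rw wq]] := rankIn_below rkS qS rpq.
have K03 : (2 < #|K 0|)%N by rewrite card_layer_stack.
have [t tK /andP[tw tp]] := card_gt2_avoid2 (base w) (base p) K03.
have rpm : ((r p).+1 <= m)%N by apply: leq_trans (rankIn_le rkS wS); rewrite rw.
have [u /[!inE] /andP[uS /eqP ru] ut] := base_onto rpm tK.
have pu : p < u by rewrite lt_base_adjacent // ut eq_sym.
have uw : u < w by rewrite lt_base_adjacent ?ut ?ru ?rw // eq_sym.
exact: lt_le_trans (lt_trans pu uw) wq.
Qed.

(* Rotating the three bases and keeping ranks is an automorphism, by [lt_stackE]. *)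
Lemma stack_automorphic : automorphicIn S.
Proof.
have [tau tauP] := card3_rotation (card_layer_stack (leq0n m)).
pose sig p := odflt p [pick q in S | (r q == r p) && (base q == tau (base p))].
have sigP p : p \in S -> [/\ sig p \in S, r (sig p) = r p & base (sig p) = tau (base p)].
  move=> pS; have [tK _ _] := tauP _ (base_layer0 pS).
  have [y /[!inE] /andP[yS /eqP ry] yb] := base_onto (rankIn_le rkS pS) tK.
  rewrite /sig; case: pickP => [z /andP[zS /andP[/eqP rz /eqP bz]] | /(_ y)] //=.
  by rewrite yS ry yb !eqxx.
have sig3 p : p \in S -> sig (sig (sig p)) = p.
  move=> pS; have [s1 r1 b1] := sigP p pS; have [s2 r2 b2] := sigP _ s1.
  have [s3 r3 b3] := sigP _ s2; have [_ _ tau3] := tauP _ (base_layer0 pS).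
  by apply: base_inj; rewrite ?r3 ?r2 ?r1 ?b3 ?b2 ?b1.
have sig_mono p q : p \in S -> q \in S -> p <= q -> sig p <= sig q.
  move=> pS qS; rewrite le_eqVlt => /orP[/eqP->|pq]; first exact: lexx.
  have [s1 r1 b1] := sigP p pS; have [s2 r2 b2] := sigP q qS.
  apply: ltW; rewrite lt_stackE // r1 r2 b1 b2; move: pq; rewrite lt_stackE //.
  case/orP => [->//|/andP[-> ne]]; apply/orP; right; apply: contra_neq ne.
  have [[_ _ tau1] [_ _ tau2]] := (tauP _ (base_layer0 pS), tauP _ (base_layer0 qS)).
  by move=> /(congr1 (fun x => tau (tau x))); rewrite tau1 tau2.
have sigS p : p \in S -> sig p \in S by case/sigP.
exists sig, (fun p => sig (sig p)); split.
- by split=> p pS; rewrite ?sigS.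
- by split=> p pS; apply: sig3.
- by move=> p q pS qS; apply: sig_mono.
- by move=> p q pS qS pq; apply: sig_mono (sig_mono _ _ pS qS pq); rewrite ?sigS.
- move=> p pS; have [_ r1 b1] := sigP p pS; have [_ tp _] := tauP _ (base_layer0 pS).
  by apply: contra_neq tp => e; rewrite -b1 e.
Qed.

End Stack.

Lemma stack6_automorphic {d : Order.disp_t} {P : finPOrderType d} (S : {set P}) :
  stack6In S -> automorphicIn S.
Proof. by case=> m [m_gt0 rkS crS]; exact: (stack_automorphic rkS m_gt0 crS). Qed.

Section Tower.
Context {d : Order.disp_t} {P : finPOrderType d}.

Lemma antichain2_automorphic (S : {set P}) : antichain2 S -> automorphicIn S.
Proof.
case=> /eqP/cards2P[a [b [ab ->]]] anti.
have le_eq : {in [set a; b] &, forall x y, x <= y -> x = y}.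
  move=> x y xS yS xy; apply/eqP; apply: contraT => /(anti x y xS yS).
  by rewrite le_comparable.
pose g x := if x == a then b else a.
have gS : {in [set a; b], forall x, g x \in [set a; b]}.
  by move=> x _; rewrite /g; case: ifP; rewrite !inE eqxx ?orbT.
have gK : {in [set a; b], cancel g g}.
  by move=> x /set2P[]->; rewrite /g ?eqxx ?(eq_sym b) (negbTE ab) ?eqxx.
exists g, g; split=> //.
- by move=> x y xS yS /le_eq ->.
- by move=> x y xS yS /le_eq ->.
- by move=> x /set2P[]->; rewrite /g ?eqxx ?(eq_sym b) (negbTE ab).
Qed.

(* [automorphicIn Q] unfolds to [exists g h, fpf_automorphismIn Q g h]. *)
Definition fpf_automorphismIn (Q : {set P}) (g h : P -> P) : Prop :=
  [/\ {in Q, forall x, g x \in Q} /\ {in Q, forall x, h x \in Q},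
      {in Q, cancel g h} /\ {in Q, cancel h g},
      {in Q &, forall x y, x <= y -> g x <= g y},
      {in Q &, forall x y, x <= y -> h x <= h y} &
      {in Q, forall x, g x != x}].

Lemma ordinal_sum_automorphic k (blk : P -> 'I_k) :
  (forall x y, (blk x < blk y)%N -> x < y) ->
  (forall i, automorphicIn [set x | blk x == i]) -> automorphic P.
Proof.
move=> blk_lt blk_aut; pose B i := [set x | blk x == i].
have [gh ghP] : exists gh : 'I_k -> (P -> P) * (P -> P),
    forall i, fpf_automorphismIn (B i) (gh i).1 (gh i).2.
  apply: (fin_all_exists (P := fun i gh => fpf_automorphismIn (B i) gh.1 gh.2)) => i.
  by have [g [h ?]] := blk_aut i; exists (g, h).
have inB x : x \in B (blk x) by rewrite inE.
have blk_le x y : x <= y -> (blk x <= blk y)%N.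
  by move=> xy; rewrite leqNgt; apply: contraL xy => /blk_lt /lt_geF ->.
pose glue (F : 'I_k -> P -> P) x := F (blk x) x.
have glue_blk F : (forall i, {in B i, forall x, F i x \in B i}) ->
    forall x, blk (glue F x) = blk x.
  by move=> FB x; have := FB _ _ (inB x); rewrite inE => /eqP.
have glue_mono F : (forall i, {in B i, forall x, F i x \in B i}) ->
    (forall i, {in B i &, forall x y, x <= y -> F i x <= F i y}) ->
    forall x y, x <= y -> glue F x <= glue F y.
  move=> FB Fmono x y xy; have := blk_le _ _ xy.
  rewrite leq_eqVlt => /orP[/eqP/val_inj e|lt]; last by apply/ltW/blk_lt; rewrite !glue_blk.
  by rewrite /glue -e; apply: Fmono; rewrite ?inE ?e.
have [gB hB] : (forall i, {in B i, forall x, (gh i).1 x \in B i}) /\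
               (forall i, {in B i, forall x, (gh i).2 x \in B i}).
  by split=> i; case: (ghP i) => -[].
exists (glue (fun i => (gh i).1)), (glue (fun i => (gh i).2)); split.
- by split=> x; rewrite inE.
- split=> x _; rewrite {1}/glue glue_blk ?/glue //;
    by case: (ghP (blk x)) => _ [gK hK] _ _ _; rewrite ?(gK x (inB x)) ?(hK x (inB x)).
- by move=> x y _ _; apply: glue_mono => // i; case: (ghP i).
- by move=> x y _ _; apply: glue_mono => // i; case: (ghP i).
- by move=> x _; rewrite /glue; case: (ghP (blk x)) => _ _ _ _; apply.
Qed.

Lemma tower6_automorphic : tower6 P -> automorphic P.
Proof.
case=> k [_ [blk [blk_lt blk_tower]]]; apply: (ordinal_sum_automorphic blk_lt) => i.
by case: (blk_tower i) => [/antichain2_automorphic|/stack6_automorphic].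
Qed.

End Tower.

(** * Layers of a ranked poset *)

Section RankAutomorphism.
Context {d : Order.disp_t} {P : finPOrderType d}.
Local Notation r := (rankIn [set: P]).

Lemma leq_rank_homo (a : P -> P) : injective a -> {homo a : x y / x <= y} ->
  forall x, (r x <= r (a x))%N.
Proof.
move=> ainj amono x; have [C [cC xC Cx cardC]] := rankIn_witness (in_setT x).
have := @leq_rankIn _ _ [set: P] (a @: C) (a x).
rewrite card_imset // cardC; apply; last 2 first.
- exact: imset_f.
- by move=> _ /imsetP[y yC ->]; apply/amono/Cx.
apply/chainInP; split=> [|_ _ /imsetP[u uC ->] /imsetP[v vC ->]]; first exact: subsetT.
by case/orP: (chainIn_comparable cC uC vC) => /amono;
  [apply: le_comparable | apply: ge_comparable].
Qed.

Lemma rank_automorphism (a b : P -> P) : cancel a b -> cancel b a ->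
  {homo a : x y / x <= y} -> {homo b : x y / x <= y} -> forall x, r (a x) = r x.
Proof.
move=> aK bK amono bmono x; apply/eqP.
rewrite eqn_leq (leq_rank_homo (can_inj aK) amono) andbT.
by have := leq_rank_homo (can_inj bK) bmono (a x); rewrite aK.
Qed.

End RankAutomorphism.

Section RankedPoset.
Context {d : Order.disp_t} {P : finPOrderType d}.
Variable n : nat.
Hypothesis rk : rankedIn [set: P] n.
Local Notation r := (rankIn [set: P]).
Local Notation L := (layer [set: P]).

Lemma in_layerT i x : (x \in L i) = (r x == i).
Proof. by rewrite in_layer in_setT. Qed.

Lemma rank_le x : (r x <= n)%N.
Proof. exact: (rankIn_le rk (in_setT x)). Qed.

Lemma rank_lt x y : x < y -> (r x < r y)%N.
Proof. exact: (rankIn_lt (in_setT x) (in_setT y)). Qed.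

Lemma le_rank x y : x <= y -> (r x <= r y)%N.
Proof. by rewrite le_eqVlt => /orP[/eqP->//|/rank_lt/ltnW]. Qed.

Lemma le_eq_rank x y : r x = r y -> x <= y -> x = y.
Proof. by move=> rxy; rewrite le_eqVlt => /orP[/eqP//|/rank_lt]; rewrite rxy ltnn. Qed.

Lemma antichain_layer i : antichain (L i).
Proof.
move=> x y; rewrite !in_layerT => /eqP rx /eqP ry nxy.
by apply: contra nxy => /orP[] le; apply/eqP; [|apply/esym]; apply: le_eq_rank le; rewrite rx ry.
Qed.

Lemma layer_nonempty i : (i <= n)%N -> exists x, x \in L i.
Proof.
move=> iN; have c0 : chainIn [set: P] set0 by apply/chainInP; split=> [|x]; rewrite ?sub0set ?inE.
have [M [_ _ hM]] := chainIn_ranks rk c0; have [x _ rx] := hM i iN.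
by exists x; rewrite in_layerT rx.
Qed.

Lemma lt_layer i j x y : x \in L i -> y \in L j -> x < y -> (i < j)%N.
Proof. by rewrite !in_layerT => /eqP<- /eqP<- /rank_lt. Qed.

Definition upper i x := [set y in L i.+1 | x < y].
Definition lower i y := [set x in L i | x < y].

Lemma in_upper i x y : (y \in upper i x) = (y \in L i.+1) && (x < y).
Proof. exact/setIdP/andP. Qed.

Lemma in_lower i x y : (x \in lower i y) = (x \in L i) && (x < y).
Proof. exact/setIdP/andP. Qed.

Lemma upper_cover_le i x u y : x \in L i -> upper i x = [set u] -> x < y -> u <= y.
Proof.
rewrite in_layerT => /eqP rx ux xy.
have rxy : (r x <= i.+1 <= r y)%N by rewrite rx leqnSn -rx rank_lt.
have [z _ [rz xz zy]] := rankIn_between rk (in_setT x) (in_setT y) (ltW xy) rxy.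
suff : z \in upper i x by rewrite ux => /set1P <-.
rewrite !inE rz eqxx /= lt_neqAle xz andbT; apply/eqP=> exz; move: rz; rewrite -exz rx; lia.
Qed.

Lemma lower_cover_ge i y u x : y \in L i.+1 -> lower i y = [set u] -> x < y -> x <= u.
Proof.
rewrite in_layerT => /eqP ry uy xy.
have rxy : (r x <= i <= r y)%N by rewrite ry leqnSn -ltnS -ry rank_lt.
have [z _ [rz xz zy]] := rankIn_between rk (in_setT x) (in_setT y) (ltW xy) rxy.
suff : z \in lower i y by rewrite uy => /set1P <-.
rewrite !inE rz eqxx /= lt_neqAle zy andbT; apply/eqP=> ezy; move: rz; rewrite ezy ry; lia.
Qed.

Lemma double_count i : (\sum_(x in L i) #|upper i x| = \sum_(y in L i.+1) #|lower i y|)%N.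
Proof.
rewrite (eq_bigr (fun x => \sum_(y in L i.+1) ((x < y)%O : nat)))%N => [|x _]; last first.
  exact: card_setId_sum.
rewrite [RHS](eq_bigr (fun y => \sum_(x in L i) ((x < y)%O : nat)))%N => [|y _]; last first.
  exact: card_setId_sum.
exact: exchange_big.
Qed.

Lemma upper_nonempty i x : (i < n)%N -> x \in L i -> exists y, y \in upper i x.
Proof.
rewrite in_layerT => iN /eqP rx; have ri : (r x <= i.+1 <= n)%N by rewrite rx leqnSn.
have [y _ [ry xy]] := rankIn_above rk (in_setT x) ri.
exists y; rewrite !inE ry eqxx /= lt_neqAle xy andbT.
by apply/eqP=> exy; move: ry; rewrite -exy rx; lia.
Qed.

Lemma lower_nonempty i y : y \in L i.+1 -> exists x, x \in lower i y.
Proof.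
rewrite in_layerT => /eqP ry; have ir : (i <= r y)%N by rewrite ry.
have [x _ [rx xy]] := rankIn_below rk (in_setT y) ir.
exists x; rewrite !inE rx eqxx /= lt_neqAle xy andbT.
by apply/eqP=> exy; move: rx; rewrite exy ry; lia.
Qed.

Definition complete_link i := forall x y, x \in L i -> y \in L i.+1 -> x < y.

Definition crown_link i := [/\ #|L i| = 3, #|L i.+1| = 3,
  {in L i, forall x, #|upper i x| = 2} & {in L i.+1, forall y, #|lower i y| = 2}].

Lemma crown_link_iso_C6 i : crown_link i -> iso_C6 (L i :|: L i.+1).
Proof.
case=> cLi cLi1 up2 dn2.
have gap x : x \in L i -> #|L i.+1 :\: upper i x| = 1.
  move=> xL; rewrite cardsD (setIidPr _) ?cLi1 ?up2 //.
  by apply/subsetP=> y /setIdP[].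
pose alpha x := odflt x [pick y in L i.+1 :\: upper i x].
have gapE x : x \in L i -> L i.+1 :\: upper i x = [set alpha x].
  move=> /gap/eqP/cards1P[a e]; rewrite /alpha e.
  by case: pickP => [y /set1P->|/(_ a)]; rewrite ?set11.
have alphaL x : x \in L i -> alpha x \in L i.+1.
  by move=> /gapE e; have /setDP[] : alpha x \in L i.+1 :\: upper i x by rewrite e set11.
have ltE x y : x \in L i -> y \in L i.+1 -> (x < y) = (y != alpha x).
  move=> xL yL; have /setP/(_ y) := gapE x xL.
  by rewrite in_set1 in_setD in_upper yL /= andbT => <-; rewrite negbK.
have alpha_inj : {in L i &, injective alpha}.
  move=> x x' xL x'L ax; apply/eqP; apply: contraT => nxx'.
  have : lower i (alpha x) \subset L i :\ x :\ x'.
    apply/subsetP=> z; rewrite in_lower => /andP[zL].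
    rewrite (ltE _ _ zL (alphaL x xL)) !in_setD1 zL andbT => ne.
    by apply/andP; split; apply: contraNneq ne => ->; rewrite ?ax.
  move/subset_leq_card; rewrite dn2 ?alphaL //.
  have := cardsD1 x' (L i :\ x); have := cardsD1 x (L i).
  by rewrite xL in_setD1 x'L eq_sym nxx' cLi; lia.
apply: (iso_C6_matching (alpha := alpha)) => //.
- by rewrite cLi1.
- rewrite disjoints_subset; apply/subsetP=> x.
  by rewrite in_setC !in_layerT => /eqP->; rewrite ltn_eqF.
move=> x y; rewrite !in_setU => xLL yLL; apply/idP/idP => [xy|/and3P[xL yL]]; last by rewrite ltE.
have [xL yL] : x \in L i /\ y \in L i.+1.
  case/orP: xLL => xL; case/orP: yLL => yL; have := lt_layer xL yL xy; rewrite ?ltnn //; lia.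
by rewrite xL yL -ltE.
Qed.

Lemma card_chain_ranks_le (D : {set P}) s t : {in D &, forall x y, x >=< y} ->
  {in D, forall x, s <= r x <= t}%N -> (#|D| <= (t - s).+1)%N.
Proof.
move=> cmpD rD; pose v x : 'I_(t - s).+1 := inord (r x - s).
have vinj : {in D &, injective v}.
  move=> x y xD yD /(congr1 (@nat_of_ord _)); have := rD x xD; have := rD y yD.
  move=> /andP[sy yt] /andP[sx xt]; rewrite !inordK ?ltnS; try lia.
  move=> exy; have rxy : r x = r y by lia.
  by case/orP: (cmpD x y xD yD) => /(le_eq_rank _) ->.
by rewrite -(card_in_imset vinj) -[X in (_ <= X)%N](card_ord (t - s).+1) max_card.
Qed.

Lemma card_ranks_ge (D : {set P}) s t : (s <= t)%N ->
  (forall j, (s <= j <= t)%N -> exists2 x, x \in D & r x = j) -> ((t - s).+1 <= #|D|)%N.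
Proof.
move=> st hit; have [x0 _ _] : exists2 x, x \in D & r x = s by apply: hit; rewrite leqnn.
pose w (a : 'I_(t - s).+1) := odflt x0 [pick x in D | r x == s + a].
have wP a : w a \in D /\ r (w a) = s + a.
  have [x xD rx] : exists2 x, x \in D & r x = s + a.
    by apply: hit; have := ltn_ord a; lia.
  by rewrite /w; case: pickP => [z /andP[zD /eqP rz] //|/(_ x)]; rewrite xD rx eqxx.
have winj : injective w by move=> a b e; apply: ord_inj; have := (wP a).2; rewrite e (wP b).2; lia.
rewrite -[X in (X <= _)%N](card_ord (t - s).+1) -(card_imset _ winj).
by apply/subset_leq_card/subsetP=> _ /imsetP[a _ ->]; case: (wP a).
Qed.

Section RankInterval.
Variables s e : nat.
Hypotheses (se : (s <= e)%N) (en : (e <= n)%N).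
Let B := [set x : P | s <= r x <= e]%N.

Lemma rankIn_interval p : p \in B -> rankIn B p = (r p - s)%N.
Proof.
rewrite inE => /andP[sp pe]; have pB : p \in B by rewrite inE sp pe.
apply/eqP; rewrite eqn_leq; apply/andP; split.
  have [C [cC pC Cp cardC]] := rankIn_witness pB.
  have := @card_chain_ranks_le C s (r p) (chainIn_comparable cC).
  rewrite cardC ltnS; apply=> x xC; rewrite le_rank ?Cp // andbT.
  by move: (subsetP (chainIn_sub cC) x xC); rewrite inE => /andP[].
have [M [cM sM hM]] := chainIn_ranks rk (chainIn1 (in_setT p)).
have pM : p \in M by rewrite (subsetP sM) ?set11.
pose D := [set x in M | s <= r x <= r p]%N.
have cD : chainIn B D.
  apply/chainInP; split=> [|x y /setIdP[xM _] /setIdP[yM _]];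
    last exact: (chainIn_comparable cM xM yM).
  apply/subsetP=> x /setIdP[_ /andP[sx xp]]; rewrite inE sx; exact: leq_trans xp pe.
have Dp : {in D, forall x, x <= p}.
  by move=> x /setIdP[xM /andP[_ xp]]; apply: (chainIn_lt_rank cM).
have pD : p \in D by rewrite inE pM sp leqnn.
apply: leq_trans (leq_rankIn cD pD Dp); rewrite -ltnS.
have -> : #|D|.-1.+1 = #|D| by rewrite prednK //; apply/card_gt0P; exists p.
apply: card_ranks_ge => // j /andP[sj jp].
have [x xM rx] := hM j (leq_trans jp (rank_le p)).
by exists x; rewrite // inE xM rx sj jp.
Qed.

Lemma rankedIn_interval : rankedIn B (e - s).
Proof.
move=> M' /andP[cM' /forallP maxM']; apply/eqP; rewrite eqn_leq; apply/andP; split.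
  apply: card_chain_ranks_le (chainIn_comparable cM') _ => x xM'.
  by move: (subsetP (chainIn_sub cM') x xM'); rewrite inE.
apply: card_ranks_ge => // j /andP[sj je].
have [M [cM sM hM]] := chainIn_ranks rk (chainIn_setT cM').
have [z zM rz] := hM j (leq_trans je en).
have cz : chainIn B (z |: M').
  apply: chainInU1 => [||x xM']; rewrite ?inE ?rz ?sj ?je //.
  exact: (chainIn_comparable cM (subsetP sM x xM') zM).
have := maxM' (z |: M'); rewrite cz subsetUr => /eqP eM'.
by exists z; rewrite // -eM' ?setU11.
Qed.

Lemma levelIn_interval j : (s + j.+1 <= e)%N ->
  levelIn B j j.+1 = L (s + j) :|: L (s + j).+1.
Proof.
move=> sje; apply/setP=> x; rewrite in_setU !in_layerT.
have xBE : (x \in B) = (s <= r x <= e)%N by rewrite inE.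
apply/setIdP/idP => [[xB]|rx]; first by rewrite rankIn_interval //; move: xB; rewrite xBE; lia.
have xB : x \in B by rewrite xBE; lia.
by split=> //; rewrite rankIn_interval //; lia.
Qed.

End RankInterval.

Definition complete_linkb j := [forall x, forall y, (x \in L j) && (y \in L j.+1) ==> (x < y)].

Lemma complete_linkP j : reflect (complete_link j) (complete_linkb j).
Proof.
apply: (iffP forallP) => [cj x y xL yL|cj x]; first by move/forallP/(_ y): (cj x); rewrite xL yL.
by apply/forallP=> y; apply/implyP=> /andP[xL yL]; apply: cj.
Qed.

(* [cuts j] counts the complete links below layer j; x lies in block [cuts (r x)]. *)
Definition cuts j := #|[set t : 'I_n | complete_linkb t && (t < j)%N]|.

Lemma leq_cuts j j' : (j <= j')%N -> (cuts j <= cuts j')%N.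
Proof.
move=> jj'; apply/subset_leq_card/subsetP=> t; rewrite !inE => /andP[-> tj].
exact: leq_trans tj jj'.
Qed.

Lemma cuts0 : cuts 0 = 0.
Proof. by apply: eq_card0 => t; rewrite !inE andbF. Qed.

Lemma cutsS j : (j < n)%N -> cuts j.+1 = (cuts j + complete_linkb j)%N.
Proof.
move=> jn; rewrite /cuts; pose jo := Ordinal jn.
have tE (t : 'I_n) : (t == j :> nat) = (t == jo) by [].
case: (boolP (complete_linkb j)) => cj.
  have -> : [set t : 'I_n | complete_linkb t && (t < j.+1)%N] =
            jo |: [set t : 'I_n | complete_linkb t && (t < j)%N].
    apply/setP=> t; rewrite !inE ltnS leq_eqVlt tE.
    by case: (eqVneq t jo) => [->|] /=; rewrite ?cj.
  by rewrite cardsU1 !inE ltnn andbF addn1.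
rewrite addn0; apply: eq_card => t; rewrite !inE ltnS leq_eqVlt tE.
by case: (eqVneq t jo) => [->|] /=; rewrite ?(negbTE cj) ?ltnn.
Qed.

Lemma lt_cuts x y : (cuts (r x) < cuts (r y))%N -> x < y.
Proof.
move=> lt; have : ~~ ([set t : 'I_n | complete_linkb t && (t < r y)%N] \subset
                      [set t : 'I_n | complete_linkb t && (t < r x)%N]).
  by apply: contraL lt => /subset_leq_card; rewrite leqNgt.
case/subsetPn=> t; rewrite !inE => /andP[/complete_linkP ct ty] /nandP[/negP//|].
rewrite -leqNgt => xt; have xtn : (r x <= t <= n)%N by rewrite xt ltnW.
have [u _ [ru xu]] := rankIn_above rk (in_setT x) xtn.
have [v _ [rv vy]] := rankIn_below rk (in_setT y) ty.
by apply: le_lt_trans xu (lt_le_trans (ct _ _ _ _) vy); rewrite in_layerT ?ru ?rv.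
Qed.

Lemma cuts_onto b : (b <= cuts n)%N -> exists j, (j <= n)%N /\ cuts j = b.
Proof.
move=> bn; have exP : exists j, (j <= n)%N && (b <= cuts j)%N by exists n; rewrite leqnn bn.
case: (ex_minnP exP) => -[|j] /andP[jn bj] jmin.
  by exists 0; move: bj; rewrite cuts0 leqn0 => /eqP.
exists j.+1; split=> //; move: bj; rewrite cutsS //.
have : (cuts j < b)%N.
  by rewrite ltnNge; apply/negP=> bj; have := jmin j; rewrite ltnW // bj ltnn => /(_ isT).
by case: (complete_linkb j) => /=; lia.
Qed.

Lemma cuts_block b : (b <= cuts n)%N -> exists s e, [/\ (s <= e <= n)%N,
   forall x, (cuts (r x) == b) = (s <= r x <= e)%N,
   forall j, (s <= j < e)%N -> ~~ complete_linkb j,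
   s = 0 \/ complete_link s.-1 & e = n \/ complete_link e].
Proof.
move=> bn; have [j0 [j0n cj0]] := cuts_onto bn.
have exP : exists j, cuts j == b by exists j0; rewrite cj0.
have exQ : exists j, (j <= n)%N && (cuts j == b) by exists j0; rewrite j0n cj0 eqxx.
case: (ex_minnP exP) => s /eqP cs smin.
have ubQ j : (j <= n)%N && (cuts j == b) -> (j <= n)%N by case/andP.
case: (ex_maxnP exQ ubQ) => e /andP[en /eqP ce] emax.
have sj0 : (s <= j0)%N by apply: smin; rewrite cj0.
have se : (s <= e)%N by apply: emax; rewrite (leq_trans sj0 j0n) cs eqxx.
have mid j : (s <= j <= e)%N -> cuts j = b.
  by case/andP=> sj je; apply/eqP; rewrite eqn_leq -{1}ce leq_cuts //= -cs leq_cuts.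
exists s, e; split.
- by rewrite se en.
- move=> x; apply/idP/idP => [/eqP cx|/mid->//].
  by rewrite smin ?cx //= emax // rank_le cx eqxx.
- move=> j /andP[sj je]; have jn : (j < n)%N by apply: leq_trans je en.
  have := cutsS jn; rewrite (mid j) ?sj ?(ltnW je) // (mid j.+1) ?je ?(leq_trans sj) //.
  by case: (complete_linkb j) => /=; lia.
- case: s cs smin sj0 se mid => [|s] cs smin _ se _; [by left | right].
  have sn : (s < n)%N by apply: leq_trans se en.
  apply/complete_linkP; have := cutsS sn; rewrite cs.
  have : cuts s != b by apply/negP=> /smin; rewrite ltnn.
  by case: (complete_linkb s) => //= csb; rewrite addn0 => ecs; rewrite ecs eqxx in csb.
- have [->|ne] := eqVneq e n; [by left | right].
  have en' : (e < n)%N by rewrite ltn_neqAle ne en.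
  apply/complete_linkP; have := cutsS en'; rewrite ce.
  have : cuts e.+1 != b by apply/negP=> ceb; have := emax e.+1; rewrite en' ceb ltnn => /(_ isT).
  by case: (complete_linkb e) => //= ceb; rewrite addn0 => ecs; rewrite ecs eqxx in ceb.
Qed.

(** * Minimal automorphic posets of width at most 3 *)

Section MinimalAutomorphic.
Hypothesis wd : width_le P 3.
Variables g h : P -> P.
Hypotheses (gK : cancel g h) (hK : cancel h g).
Hypotheses (gmono : {homo g : x y / x <= y}) (hmono : {homo h : x y / x <= y}).
Hypothesis gfix : forall x, g x != x.
Hypothesis minQ : forall Q : {set P}, retract Q -> Q \proper [set: P] -> ~ automorphicIn Q.

Lemma rank_g x : r (g x) = r x.
Proof. exact: rank_automorphism. Qed.

Lemma rank_h x : r (h x) = r x.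
Proof. exact: rank_automorphism. Qed.

Lemma lt_g x y : (g x < g y) = (x < y).
Proof.
suff lt_homo (a b : P -> P) : cancel a b -> {homo a : u v / u <= v} -> {homo a : u v / u < v}.
  by apply/idP/idP => [/(lt_homo _ _ hK hmono)|/(lt_homo _ _ gK gmono)]; rewrite ?gK.
move=> aK amono u v; rewrite !lt_neqAle => /andP[nuv /amono ->].
by rewrite (inj_eq (can_inj aK)) nuv.
Qed.

Lemma layer_g i x : (g x \in L i) = (x \in L i).
Proof. by rewrite !in_layerT rank_g. Qed.

Lemma card_layer_le3 i : (#|L i| <= 3)%N.
Proof. exact/wd/antichain_layer. Qed.

Lemma card_layer_ge2 i : (i <= n)%N -> (2 <= #|L i|)%N.
Proof.
move=> /layer_nonempty[x xL]; have : [set x; g x] \subset L i.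
  by apply/subsetP=> y /set2P[]->; rewrite ?layer_g.
by move/subset_leq_card; rewrite cards2 eq_sym gfix.
Qed.

(* A fixed-point-free permutation of a set of at most three elements is transitive. *)
Lemma layer_orbit i x y : x \in L i -> y \in L i -> [|| y == x, y == g x | y == g (g x)].
Proof.
move=> xL yL; apply/norP=> -[nyx /norP[nygx nyggx]].
have ginj := can_inj gK.
have c3 : #|[set x; g x; y]| = 3.
  rewrite -setUA cardsU1 cards2 !inE !(eq_sym x) (negbTE (gfix x)) (negbTE nyx).
  by rewrite (eq_sym (g x)) nygx.
have e3 : L i = [set x; g x; y].
  apply/eqP; rewrite eq_sym eqEcard c3 card_layer_le3 andbT.
  by apply/subsetP=> z /setUP[/set2P[]->|/set1P->]; rewrite ?layer_g.
have : g (g x) \in L i by rewrite !layer_g.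
rewrite e3 !inE => /orP[/orP[]|] /eqP ggx.
- have : g y \in L i by rewrite layer_g.
  rewrite e3 !inE => /orP[/orP[]|] /eqP gy.
  + by move: nygx; rewrite -ggx in gy; rewrite (ginj _ _ gy) eqxx.
  + by move: nyx; rewrite (ginj _ _ gy) eqxx.
  + by move: (gfix y); rewrite gy eqxx.
- by move: (gfix (g x)); rewrite ggx eqxx.
- by move: nyggx; rewrite ggx eqxx.
Qed.

Lemma stable_automorphicIn (Q : {set P}) :
  {in Q, forall x, g x \in Q /\ h x \in Q} -> automorphicIn Q.
Proof.
move=> QP; exists g, h; split.
- by split=> x /QP[].
- by split=> x _; rewrite ?gK ?hK.
- by move=> x y _ _; apply: gmono.
- by move=> x y _ _; apply: hmono.
- by move=> x _; apply: gfix.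
Qed.

(* The complement of a layer is g-stable, hence automorphic, so it cannot be a retract. *)
Lemma no_layer_retraction i (f : P -> P) : (i <= n)%N ->
  (forall x, f x \notin L i) -> {homo f : x y / x <= y} -> {in ~: L i, f =1 id} -> False.
Proof.
move=> iN fL fmono fid; have [x xL] := layer_nonempty iN.
apply: (minQ (Q := ~: L i)).
- by exists f; split=> // y; rewrite inE fL.
- by rewrite properT; apply/eqP=> /setP/(_ x); rewrite in_setC in_setT xL.
- apply: stable_automorphicIn => y; rewrite !in_setC => yL.
  by rewrite layer_g -(layer_g _ (h y)) hK.
Qed.

Lemma upper_g i x : upper i (g x) = g @: upper i x.
Proof.
by apply/setP=> y; rewrite -[y]hK (mem_imset _ _ (can_inj gK)) !inE rank_g lt_g.
Qed.

Lemma lower_g i y : lower i (g y) = g @: lower i y.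
Proof.
by apply/setP=> x; rewrite -[x]hK (mem_imset _ _ (can_inj gK)) !inE rank_g lt_g.
Qed.

Lemma card_upper_layer i j x y : x \in L j -> y \in L j -> #|upper i y| = #|upper i x|.
Proof.
move=> xL yL; case/or3P: (layer_orbit xL yL) => /eqP->;
  by rewrite ?upper_g ?card_imset //; apply: can_inj gK.
Qed.

Lemma card_lower_layer i j x y : x \in L j -> y \in L j -> #|lower i y| = #|lower i x|.
Proof.
move=> xL yL; case/or3P: (layer_orbit xL yL) => /eqP->;
  by rewrite ?lower_g ?card_imset //; apply: can_inj gK.
Qed.

(* Otherwise sending each element of layer i to its unique upper cover is a retraction. *)
Lemma no_unique_upper_covers i : (i < n)%N -> ~ {in L i, forall x, #|upper i x| = 1}.
Proof.
move=> iN covers; pose f x := if x \in L i then odflt x [pick y in upper i x] else x.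
have fE x : x \in L i -> upper i x = [set f x].
  move=> xL; have /eqP/cards1P[u ux] := covers x xL.
  by rewrite /f xL; case: pickP => [y|/(_ u)]; rewrite ux ?in_set1 ?eqxx // => /eqP->.
have fU x : x \in L i -> f x \in L i.+1 /\ x < f x.
  by move=> /fE ux; have /setIdP : f x \in upper i x by rewrite ux set11.
have fid x : x \notin L i -> f x = x by rewrite /f => /negbTE->.
apply: (no_layer_retraction (f := f) (ltnW iN)) => [x|x y xy|x].
- have [xL|/fid-> //] := boolP (x \in L i).
  by have [+ _] := fU x xL; rewrite !in_layerT => /eqP->; rewrite gtn_eqF.
- case: (boolP (x \in L i)) => xL; case: (boolP (y \in L i)) => yL.
  + have rxy : r x = r y by move: xL yL; rewrite !in_layerT => /eqP-> /eqP->.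
    by rewrite (le_eq_rank rxy xy).
  + rewrite (fid y yL); apply: (upper_cover_le xL (fE x xL)).
    by rewrite lt_neqAle xy andbT; apply: contraNneq yL => <-.
  + by rewrite (fid x xL); apply: le_trans xy (ltW (fU y yL).2).
  + by rewrite !fid.
- by rewrite inE => /fid.
Qed.

Lemma no_unique_lower_covers i : (i < n)%N -> ~ {in L i.+1, forall y, #|lower i y| = 1}.
Proof.
move=> iN covers; pose f y := if y \in L i.+1 then odflt y [pick x in lower i y] else y.
have fE y : y \in L i.+1 -> lower i y = [set f y].
  move=> yL; have /eqP/cards1P[u uy] := covers y yL.
  by rewrite /f yL; case: pickP => [x|/(_ u)]; rewrite uy ?in_set1 ?eqxx // => /eqP->.
have fD y : y \in L i.+1 -> f y \in L i /\ f y < y.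
  by move=> /fE uy; have /setIdP : f y \in lower i y by rewrite uy set11.
have fid y : y \notin L i.+1 -> f y = y by rewrite /f => /negbTE->.
apply: (no_layer_retraction (f := f) iN) => [y|x y xy|y].
- have [yL|/fid-> //] := boolP (y \in L i.+1).
  by have [+ _] := fD y yL; rewrite !in_layerT => /eqP->; rewrite ltn_eqF.
- case: (boolP (x \in L i.+1)) => xL; case: (boolP (y \in L i.+1)) => yL.
  + have rxy : r x = r y by move: xL yL; rewrite !in_layerT => /eqP-> /eqP->.
    by rewrite (le_eq_rank rxy xy).
  + by rewrite (fid y yL); apply: le_trans (ltW (fD x xL).2) xy.
  + rewrite (fid x xL); apply: (lower_cover_ge yL (fE y yL)).
    by rewrite lt_neqAle xy andbT; apply: contraNneq xL => ->.
  + by rewrite !fid.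
- by rewrite inE => /fid.
Qed.

(* Degrees are constant on layers (g is transitive there); double counting the
   comparabilities between two layers of sizes in [2, 3] leaves only these two cases. *)
Lemma complete_or_crown_link i : (i < n)%N -> complete_link i \/ crown_link i.
Proof.
move=> iN; have [x0 x0L] := layer_nonempty (ltnW iN); have [y0 y0L] := layer_nonempty iN.
have up1 : (0 < #|upper i x0|)%N.
  by have [y yu] := upper_nonempty iN x0L; apply/card_gt0P; exists y.
have dn1 : (0 < #|lower i y0|)%N.
  by have [x xl] := lower_nonempty y0L; apply/card_gt0P; exists x.
have up2 : (2 <= #|upper i x0|)%N.
  rewrite ltnNge; apply/negP=> le1; apply: (no_unique_upper_covers iN) => x xL.
  by rewrite (card_upper_layer i x0L xL); apply/eqP; rewrite eqn_leq le1 up1.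
have dn2 : (2 <= #|lower i y0|)%N.
  rewrite ltnNge; apply/negP=> le1; apply: (no_unique_lower_covers iN) => y yL.
  by rewrite (card_lower_layer i y0L yL); apply/eqP; rewrite eqn_leq le1 dn1.
have upL : (#|upper i x0| <= #|L i.+1|)%N by apply/subset_leq_card/subsetP=> y /setIdP[].
have dnL : (#|lower i y0| <= #|L i|)%N by apply/subset_leq_card/subsetP=> x /setIdP[].
have dc : (#|L i| * #|upper i x0| = #|L i.+1| * #|lower i y0|)%N.
  rewrite -!sum_nat_const; transitivity (\sum_(x in L i) #|upper i x|)%N.
    by apply: eq_bigr => x xL; rewrite (card_upper_layer i xL x0L).
  by rewrite double_count; apply: eq_bigr => y yL; rewrite (card_lower_layer i y0L yL).
have [p2 q2] := (card_layer_ge2 (ltnW iN), card_layer_ge2 iN).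
have [p3 q3] := (card_layer_le3 i, card_layer_le3 i.+1).
have [up_full|[p3' [q3' [up2' dn2']]]] : #|upper i x0| = #|L i.+1| \/
    #|L i| = 3 /\ #|L i.+1| = 3 /\ #|upper i x0| = 2 /\ #|lower i y0| = 2.
- move: dc; set p := #|L i|; set q := #|L i.+1|.
  set du := #|upper i x0|; set dd := #|lower i y0|; nia.
- left=> x y xL yL; suff : y \in upper i x by case/setIdP.
  have -> : upper i x = L i.+1; last by [].
  apply/eqP; rewrite eqEcard (card_upper_layer i x0L xL) up_full leqnn andbT.
  by apply/subsetP=> z /setIdP[].
- right; split=> // [x xL|y yL]; first by rewrite (card_upper_layer i x0L xL).
  by rewrite (card_lower_layer i y0L yL).
Qed.

Section IsolatedLayer.
Variable i : nat.
Hypothesis below_i : i = 0 \/ complete_link i.-1.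
Hypothesis above_i : i = n \/ complete_link i.

Lemma lt_isolated_above x z : x \in L i -> (i < r z)%N -> x < z.
Proof.
move=> xL iz; case: above_i => [ein|ci]; first by move: (rank_le z); rewrite -ein leqNgt iz.
have [w _ [rw wz]] := rankIn_below rk (in_setT z) iz.
by apply: lt_le_trans wz; apply: ci; rewrite // in_layerT rw.
Qed.

Lemma lt_isolated_below x z : x \in L i -> (r z < i)%N -> z < x.
Proof.
move=> xL zi; case: below_i => [ei|ci]; first by rewrite ei in zi.
have i0 : (0 < i)%N by apply: leq_ltn_trans zi.
have rzi : (r z <= i.-1 <= n)%N.
  rewrite -ltnS prednK // zi; apply: leq_trans (leq_pred _) _.
  by move: xL; rewrite in_layerT => /eqP <-; apply: rank_le.
have [w _ [rw zw]] := rankIn_above rk (in_setT z) rzi.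
by apply: le_lt_trans zw _; apply: ci; rewrite ?prednK // in_layerT rw.
Qed.

(* Elements of the isolated layer are comparable to everything outside it, so a map may
   be altered freely on that layer. *)
Lemma homo_isolated_patch (phi psi : P -> P) :
  {homo phi : x y / x <= y} -> (forall x, r (phi x) = r x) ->
  {in L i, forall x, psi x \in L i} -> {in ~: L i, psi =1 phi} ->
  {homo psi : x y / x <= y}.
Proof.
move=> phimono rphi psiL psiE x y xy.
have rL z : z \in L i -> r z = i by rewrite in_layerT => /eqP.
case: (boolP (x \in L i)) => xL; case: (boolP (y \in L i)) => yL.
- by rewrite (@le_eq_rank x y) ?rL.
- have xy' : x < y by rewrite lt_neqAle xy andbT; apply: contraNneq yL => <-.
  rewrite (psiE y) ?in_setC //; apply: ltW; apply: lt_isolated_above; first exact: psiL.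
  by rewrite rphi -(rL x xL) rank_lt.
- have xy' : x < y by rewrite lt_neqAle xy andbT; apply: contraNneq xL => ->.
  rewrite (psiE x) ?in_setC //; apply: ltW; apply: lt_isolated_below; first exact: psiL.
  by rewrite rphi -(rL y yL) rank_lt.
- by rewrite !psiE ?in_setC //; apply: phimono.
Qed.

Section IsolatedTriple.
Variables a b c : P.
Hypotheses (ab : a != b) (ac : a != c) (bc : b != c) (Li : L i = [set a; b; c]).

Let aL : a \in L i. Proof. by rewrite Li !inE eqxx. Qed.
Let bL : b \in L i. Proof. by rewrite Li !inE eqxx orbT. Qed.
Let cL : c \in L i. Proof. by rewrite Li !inE eqxx !orbT. Qed.

Let neL x y : x \in L i -> y \notin L i -> y != x.
Proof. by move=> xL; apply: contraNneq => ->. Qed.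

Lemma retract_isolated_drop : retract (~: [set c]).
Proof.
exists (fun x => if x == c then a else x); split.
- by move=> x; rewrite !inE; case: (eqVneq x c).
- apply: (homo_isolated_patch (phi := id)) => // x xL; first by case: eqP.
  by rewrite (negbTE (neL cL _)) // -in_setC.
- by move=> x; rewrite !inE => /negbTE->.
Qed.

(* Swap a and b and act by g elsewhere. *)
Lemma automorphic_isolated_drop : automorphicIn (~: [set c]).
Proof.
pose sw (phi : P -> P) x := if x == a then b else if x == b then a else phi x.
have swE phi : {in ~: L i, sw phi =1 phi}.
  by move=> x; rewrite in_setC => xL; rewrite /sw (negbTE (neL aL xL)) (negbTE (neL bL xL)).
have sw_mono phi : {homo phi : x y / x <= y} -> (forall x, r (phi x) = r x) ->
    {homo sw phi : x y / x <= y}.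
  move=> phimono rphi; apply: (homo_isolated_patch phimono rphi) (swE phi) => x xL.
  by rewrite /sw; case: ifP => // _; case: ifP => // _; rewrite in_layerT rphi -in_layerT.
have [swa swb] : (forall phi, sw phi a = b) /\ (forall phi, sw phi b = a).
  by split=> phi; rewrite /sw ?eqxx // eq_sym (negbTE ab).
have dropE x : x \in ~: [set c] -> [\/ x = a, x = b | x \notin L i].
  rewrite in_setC in_set1 => xc; have [->|xa] := eqVneq x a; first by constructor 1.
  have [->|xb] := eqVneq x b; [by constructor 2 | constructor 3].
  by rewrite Li !inE (negbTE xa) (negbTE xb) (negbTE xc).
have out_phi phi x : (forall x, r (phi x) = r x) -> x \notin L i -> phi x \notin L i.
  by move=> rphi; rewrite !in_layerT rphi.
have swQ phi : (forall x, r (phi x) = r x) -> {in ~: [set c], forall x, sw phi x \in ~: [set c]}.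
  move=> rphi x /dropE[->|->|xL]; rewrite in_setC in_set1 ?swa ?swb //.
  by rewrite swE ?in_setC //; apply: neL cL (out_phi _ _ rphi xL).
have swK phi psi : cancel phi psi -> (forall x, r (phi x) = r x) ->
    {in ~: [set c], cancel (sw phi) (sw psi)}.
  move=> phiK rphi x /dropE[->|->|xL]; rewrite ?swa ?swb //.
  by rewrite !swE ?in_setC ?phiK ?out_phi.
exists (sw g), (sw h); split.
- by split; apply: swQ; [apply: rank_g | apply: rank_h].
- by split; apply: swK => //; [apply: rank_g | apply: rank_h].
- by move=> x y _ _; apply: sw_mono; [apply: gmono | apply: rank_g].
- by move=> x y _ _; apply: sw_mono; [apply: hmono | apply: rank_h].
- move=> x /dropE[->|->|xL]; rewrite ?swa ?swb;
    [by rewrite eq_sym | by [] | by rewrite swE ?in_setC // gfix].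
Qed.

End IsolatedTriple.

Lemma no_isolated_triple_layer : #|L i| = 3 -> False.
Proof.
case/card3P=> a [b [c [ab ac bc Li]]].
apply: (minQ (Q := ~: [set c])); first by apply: retract_isolated_drop Li.
  by rewrite properT; apply/eqP=> /setP/(_ c); rewrite !inE eqxx.
by apply: automorphic_isolated_drop Li.
Qed.

End IsolatedLayer.

(* Blocks are the maximal rank intervals without complete links: a single layer, which
   has two elements, or a stack of crowns. *)
Lemma tower6_of_minimal : tower6 P.
Proof.
have cuts_lt x : (cuts (r x) < (cuts n).+1)%N by rewrite ltnS leq_cuts ?rank_le.
exists (cuts n).+1; split=> //; exists (fun x => Ordinal (cuts_lt x)); split.
  by move=> x y /lt_cuts.
move=> b; have bn : (b <= cuts n)%N by rewrite -ltnS ltn_ord.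
have [s [e [/andP[se en] blockE noncut lo hi]]] := cuts_block bn.
have -> : [set x | Ordinal (cuts_lt x) == b] = [set x : P | s <= r x <= e]%N.
  by apply/setP=> x; rewrite !inE -blockE.
have [es|ne] := eqVneq s e.
  left; subst e; have -> : [set x : P | s <= r x <= s]%N = L s.
    by apply/setP=> x; rewrite in_layerT inE -eqn_leq.
  split; last exact: antichain_layer.
  have := card_layer_ge2 en; have := card_layer_le3 s; rewrite leq_eqVlt => /orP[/eqP c3|].
    by case: (no_isolated_triple_layer lo hi c3).
  by rewrite ltnS => c2 c2'; apply/eqP; rewrite eqn_leq c2 c2'.
right; exists (e - s)%N; split; first by rewrite subn_gt0 ltn_neqAle ne se.
  exact: rankedIn_interval.
move=> i ie; rewrite levelIn_interval //; last by lia.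
have sin : (s + i < n)%N by lia.
case: (complete_or_crown_link sin) => [/complete_linkP cl|]; last exact: crown_link_iso_C6.
by have := noncut (s + i); rewrite cl; lia.
Qed.

End MinimalAutomorphic.

End RankedPoset.

Theorem corollary3p6 :
  (forall (d : Order.disp_t) (P : finPOrderType d),
      (0 < #|P|)%N ->
      (exists n : nat, rankedIn [set: P] n) ->
      width_le P 3 ->
      minimal_automorphic P -> tower6 P) /\
  (forall (d : Order.disp_t) (P : finPOrderType d),
      tower6 P -> automorphic P).
Proof.
split=> [d P _ [n rk] wd [[g [h [_ [gK hK] gmono hmono gfix]]] minQ]|d P].
  apply: (tower6_of_minimal rk wd (g := g) (h := h)) minQ => x *;
    by [apply: gK | apply: hK | apply: gmono | apply: hmono | apply: gfix].
exact: tower6_automorphic.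
Qed.
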